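(* Let $(S,K,I)$ be a homogeneous split graph and $\Phi=\Phi(S)$. Then: (1) for distinct $u,v\in I$, $\sigma_{uv}(S)=0$ if and only if $u$ and $v$ are twins in $S$; (2) $\sigma_{uv}(S)$ is a perfect square for every pair of distinct $u,v\in I$; (3) $\deg(S)\ge1$; in particular, if $d$ denotes the common degree in $S$ of the vertices of $I$, then $d\notin\{0,|K|\}$; (4) $\Phi$ has no induced subgraph isomorphic to $K_2\,\dot\cup\,K_1$; (5) $\operatorname{diam}(\Phi)\le 2$ (in particular $\Phi$ is connected); (6) $\Phi$ contains no induced cycle of length $5$ or more.
   Context: All graphs are finite and simple. A split graph is a graph $S$ whose vertex set is a disjoint union $V(S)=K\,\dot\cup\,I$ with $K$ a clique and $I$ an independent set; $(K,I)$ is called a bipartition of $S$, and $(S,K,I)$ denotes $S$ together with this fixed bipartition. For a split graph $(S,K,I)$ and distinct $u,v\in I$, $\sigma_{uv}(S)$ is the number of induced subgraphs of $S$ isomorphic to $P_4$ containing both $u$ and $v$. The factor graph $\Phi(S)$ is the loopless multigraph with vertex set $I$ having exactly $\sigma_{uv}(S)$ parallel edges between $u$ and $v$. Graph notions (connected, complete, clique, diameter, induced subgraph, etc.) applied to $\Phi(S)$ refer to its underlying simple graph, in which $u\sim v$ iff $\sigma_{uv}(S)\ge1$. $\deg(S)$ denotes the number of induced subgraphs of $S$ isomorphic to $P_4$ (equivalently the number of edges of $\Phi(S)$ counted with multiplicity). Two vertices $u,v$ of a graph $G$ are twins if $N_G(u)\setminus\{v\}=N_G(v)\setminus\{u\}$.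 A vertex $w$ of $(S,K,I)$ is swing if $N_S(w)=K\setminus\{w\}$. $(S,K,I)$ is balanced if $|K|=\omega(S)$ and $|I|=\alpha(S)$; it is known that $S$ is balanced iff it has no swing vertex. $(S,K,I)$ is homogeneous if it is balanced and all vertices of $I$ have the same degree in $S$. *)

(* Finite simple graphs: a symmetric irreflexive relation e on a finType T. *)
From mathcomp Require Import all_boot.
Set Implicit Arguments. Unset Strict Implicit. Unset Printing Implicit Defensive.

Section SplitGraphs.
Variables (T : finType) (e : rel T).

Definition is_clique (A : {set T}) : bool :=
  [forall x in A, forall y in A, (x != y) ==> e x y].
Definition is_stable (A : {set T}) : bool :=
  [forall x in A, forall y in A, (x != y) ==> ~~ e x y].

Definition omega : nat := \max_(A : {set T} | is_clique A) #|A|.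
Definition alpha : nat := \max_(A : {set T} | is_stable A) #|A|.

Definition split_bipartition (K I : {set T}) : bool :=
  [&& K :&: I == set0, K :|: I == setT, is_clique K & is_stable I].

Definition nbhd (v : T) : {set T} := [set w | e v w].
Definition vdeg (v : T) : nat := #|nbhd v|.

Definition balanced (K I : {set T}) : bool :=
  (#|K| == omega) && (#|I| == alpha).

Definition homogeneous (K I : {set T}) : bool :=
  balanced K I && [forall u in I, forall v in I, vdeg u == vdeg v].

Definition is_P4 (X : {set T}) : bool :=
  [exists a, exists b, exists c, exists d,
    (X == [set a; b; c; d]) && uniq [:: a; b; c; d] &&
    e a b && e b c && e c d && ~~ e a c && ~~ e a d && ~~ e b d].

Definition sigma (u v : T) : nat :=
  #|[set X : {set T} | is_P4 X && (u \in X) && (v \in X)]|.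

Definition P4deg : nat := #|[set X : {set T} | is_P4 X]|.

Definition twins (u v : T) : bool := nbhd u :\ v == nbhd v :\ u.

(* adjacency in the underlying simple graph of the factor graph Phi(S) on I *)
Definition phi_adj (I : {set T}) (u v : T) : bool :=
  [&& u \in I, v \in I, u != v & 0 < sigma u v].

End SplitGraphs.

From mathcomp Require Import all_boot.
Set Implicit Arguments. Unset Strict Implicit. Unset Printing Implicit Defensive.

(* For distinct u, v in I, an induced P4 through u and v has its inner vertices
   in the clique K and its ends in I, so it is u - x - y - v with x in
   N(u) \ N(v) and y in N(v) \ N(u). Hence sigma_uv = |N(u) \ N(v)| * |N(v) \ N(u)|,
   and equal degrees make both factors equal: sigma_uv is a square, zero exactly
   when N(u) = N(v), i.e. when u and v are twins. So Phi is the complete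
   multipartite graph whose parts are the classes of equal neighbourhoods, which
   gives (4)-(6). Maximality of K and I forces every u in I to miss some k in K,
   and every k in K to have a neighbour in I; hence no part of Phi is all of I,
   which gives (3) and connectedness. *)

Lemma cardsD_sym (T : finType) (A B : {set T}) :
  #|A| = #|B| -> #|A :\: B| = #|B :\: A|.
Proof. by move=> eqAB; rewrite !cardsD setIC eqAB. Qed.

Section CompleteMultipartite.
Variables (T V : finType) (I : {set T}) (f : T -> V) (adj : rel T).
Hypotheses (adj_irr : irreflexive adj)
  (adjE : forall u v, u \in I -> v \in I -> u != v -> adj u v = (f u != f v)).

Lemma multipartite_no_K2K1 x y z : x \in I -> y \in I -> z \in I ->
  x != z -> y != z -> ~ [/\ adj x y, ~~ adj x z & ~~ adj y z].
Proof.
move=> xI yI zI xz yz [xy nxz nyz].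
have x_neq_y : x != y by apply: contraTneq xy => ->; rewrite adj_irr.
move: xy nxz nyz; rewrite !adjE // !negbK => /eqP fxy /eqP fxz /eqP fyz.
by apply: fxy; rewrite fxz fyz.
Qed.

Lemma multipartite_diam2 u v :
  (exists2 w, w \in I & f w != f u) -> u \in I -> v \in I -> u != v ->
  adj u v \/ exists2 w, adj u w & adj w v.
Proof.
move=> [w wI fwu] uI vI uv; rewrite adjE //.
case: eqP => [fuv|]; [right | by left].
have uw : u != w by apply: contra_neq fwu => ->.
have wv : w != v by apply: contra_neq fwu => ->.
by exists w; rewrite adjE // -?fuv // eq_sym.
Qed.

Lemma multipartite_no_long_induced_cycle n (c : 'I_n -> T) :
  5 <= n -> injective c -> (forall i, c i \in I) ->
  ~ (forall i j : 'I_n, adj (c i) (c j) = (i.+1 %% n == j) || (j.+1 %% n == i)).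
Proof.
move=> n_ge5 c_inj cI cycleE.
have [n0 n2 n3] : [/\ 0 < n, 2 < n & 3 < n] by split; apply: leq_trans n_ge5.
pose i0 := Ordinal n0; pose i2 := Ordinal n2; pose i3 := Ordinal n3.
have := cycleE i0 i2; have := cycleE i0 i3; have := cycleE i2 i3.
rewrite /= !modn_small ?(leq_trans _ n_ge5) // !adjE ?(inj_eq c_inj) //.
by move=> + /negbFE/eqP f03 /negbFE/eqP f02; rewrite -f02 f03 eqxx.
Qed.

End CompleteMultipartite.

Section Graphs.
Variables (T : finType) (e : rel T).
Hypotheses (e_sym : symmetric e) (e_irr : irreflexive e).

Definition induced_P4 (a b c d : T) : bool :=
  [&& uniq [:: a; b; c; d], e a b, e b c, e c d, ~~ e a c, ~~ e a d & ~~ e b d].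

Lemma is_P4P X :
  reflect (exists a b c d, X = [set a; b; c; d] /\ induced_P4 a b c d) (is_P4 e X).
Proof.
apply: (iffP existsP) => [[a /existsP[b /existsP[c /existsP[d]]]] | [a [b [c [d [-> P]]]]]].
  case/andP=> /andP[/andP[/andP[/andP[/andP[/andP[/eqP-> un] ab] bc] cd] ac] ad] bd.
  by exists a, b, c, d; rewrite /induced_P4 un ab bc cd ac ad bd.
case/and4P: P => un ab bc /and4P[cd ac ad bd].
by exists a; apply/existsP; exists b; apply/existsP; exists c; apply/existsP; exists d;
  rewrite eqxx un ab bc cd ac ad bd.
Qed.

Lemma induced_P4_rev a b c d : induced_P4 a b c d -> induced_P4 d c b a.
Proof.
rewrite /induced_P4 => /and4P[un ab bc /and4P[cd ac ad bd]].
have -> : uniq [:: d; c; b; a] by rewrite -rev_uniq.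
by rewrite /= !(e_sym d) (e_sym c b) (e_sym b a) (e_sym c a) cd bc ab bd ad ac.
Qed.

Lemma induced_P4_nbhd_ends a b c d z : induced_P4 a b c d ->
  z \in [set a; b; c; d] -> (e a z -> z = b) /\ (e d z -> z = c).
Proof.
rewrite /induced_P4 => /and4P[_ _ _ /and4P[_ ac ad bd]].
have [da db] : ~~ e d a /\ ~~ e d b by rewrite !(e_sym d).
rewrite !inE -!orbA => /or4P[]/eqP->; split=> //;
  by rewrite ?e_irr ?(negbTE ac) ?(negbTE ad) ?(negbTE da) ?(negbTE db).
Qed.

Lemma clique_card_le_omega A : is_clique e A -> #|A| <= omega e.
Proof. exact: (@leq_bigmax_cond _ _ (fun A : {set T} => #|A|)). Qed.

Lemma stable_card_le_alpha A : is_stable e A -> #|A| <= alpha e.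
Proof. exact: (@leq_bigmax_cond _ _ (fun A : {set T} => #|A|)). Qed.

Lemma sigma_le_P4deg u v : sigma e u v <= P4deg e.
Proof. by apply/subset_leq_card/subsetP => X; rewrite !inE => /andP[/andP[]]. Qed.

End Graphs.

Section SplitGraph.
Variables (T : finType) (e : rel T) (K I : {set T}).
Hypotheses (e_sym : symmetric e) (e_irr : irreflexive e)
  (KI : split_bipartition e K I).

Lemma split_cover x : (x \in K) || (x \in I).
Proof.
by case/and4P: KI => _ /eqP KIT _ _; move: (in_setT x); rewrite -KIT inE.
Qed.

Lemma split_notinK x : x \in I -> x \notin K.
Proof.
case/and4P: KI => /eqP KI0 _ _ _ xI; apply: contra_eqN KI0 => xK.
by apply/set0Pn; exists x; rewrite inE xK.
Qed.

Lemma split_neq x y : x \in I -> y \in K -> x != y.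
Proof. by move=> xI; apply: contraTneq => <-; apply: split_notinK. Qed.

Lemma split_edgeK x y : x \in K -> y \in K -> x != y -> e x y.
Proof.
case/and4P: KI => _ _ /forall_inP cliqueK _ xK yK.
by move: (cliqueK x xK) => /forall_inP/(_ y yK)/implyP.
Qed.

Lemma split_nonedgeI x y : x \in I -> y \in I -> ~~ e x y.
Proof.
case/and4P: KI => _ _ _ /forall_inP stableI xI yI.
have [->|xy] := eqVneq x y; first by rewrite e_irr.
by move: (stableI x xI) => /forall_inP/(_ y yI)/implyP; apply.
Qed.

Lemma split_nbhdK u x : u \in I -> e u x -> x \in K.
Proof.
move=> uI ux; case/orP: (split_cover x) => // xI.
by rewrite (negbTE (split_nonedgeI uI xI)) in ux.
Qed.

Lemma induced_P4_innerK a b c d : induced_P4 e a b c d -> b \in K.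
Proof.
rewrite /induced_P4 => /and4P[un ab bc /and4P[_ ac _ _]].
case/orP: (split_cover b) => // bI.
have aK : a \in K by apply: split_nbhdK bI _; rewrite e_sym.
have cK : c \in K by apply: split_nbhdK bI _.
have ac_neq : a != c by move: un; rewrite /= !inE negb_or => /andP[/andP[_ /norP[]]].
by rewrite (split_edgeK aK cK ac_neq) in ac.
Qed.

Lemma induced_P4_endI a b c d : induced_P4 e a b c d -> a \in I.
Proof.
move=> P; have cK := induced_P4_innerK (induced_P4_rev e_sym P).
case/and4P: P => un _ _ /and4P[_ ac _ _]; case/orP: (split_cover a) => // aK.
have ac_neq : a != c by move: un; rewrite /= !inE negb_or => /andP[/andP[_ /norP[]]].
by rewrite (split_edgeK aK cK ac_neq) in ac.
Qed.

Lemma induced_P4_through u v x y : u \in I -> v \in I -> u != v ->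
  x \in nbhd e u :\: nbhd e v -> y \in nbhd e v :\: nbhd e u -> induced_P4 e u x y v.
Proof.
move=> uI vI uv; rewrite !inE => /andP[vx ux] /andP[uy vy].
have xK := split_nbhdK uI ux; have yK := split_nbhdK vI vy.
have xy : x != y by apply: contraNneq vx => ->.
rewrite /induced_P4 /= !inE !negb_or (split_neq uI xK) (split_neq uI yK) uv.
rewrite (split_edgeK xK yK xy) xy ux -(e_sym v) vy uy (split_nonedgeI uI vI) (e_sym x) vx.
by rewrite !(eq_sym _ v) (split_neq vI xK) (split_neq vI yK).
Qed.

Lemma P4_throughE u v : u \in I -> v \in I -> u != v ->
  [set X | is_P4 e X && (u \in X) && (v \in X)] =
  (fun p => [set u; p.1; p.2; v]) @: setX (nbhd e u :\: nbhd e v) (nbhd e v :\: nbhd e u).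
Proof.
move=> uI vI uv; apply/setP => X; rewrite inE; apply/idP/imsetP.
  case/andP => /andP[/is_P4P[a [b [c [d [-> P]]]]] uX] vX.
  have P' := induced_P4_rev e_sym P.
  have [aI dI] := (induced_P4_endI P, induced_P4_endI P').
  have [bK cK] := (induced_P4_innerK P, induced_P4_innerK P').
  have endsE w : w \in I -> w \in [set a; b; c; d] -> (w == a) || (w == d).
    by move=> wI; rewrite !inE -!orbA => /or4P[]/eqP wE; rewrite ?wE ?eqxx ?orbT //;
      [move: bK | move: cK]; rewrite -wE (negbTE (split_notinK wI)).
  case/and4P: P => _ ab _ /and4P[cd ac _ bd]; rewrite e_sym in cd; rewrite e_sym in bd.
  case/orP: (endsE u uI uX) => /eqP uE; case/orP: (endsE v vI vX) => /eqP vE;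
    rewrite ?uE ?vE ?eqxx in uv => //; [exists (b, c) | exists (c, b)];
    rewrite ?inE ?uE ?vE ?ab ?cd ?bd ?ac //.
  apply/setP => z; rewrite !inE /=.
  by case: (z == a); case: (z == b); case: (z == c); case: (z == d).
case=> -[x y] /setXP[xA yB] ->.
rewrite /= !inE !eqxx !orbT !andbT; apply/is_P4P.
by exists u, x, y, v; split; last exact: induced_P4_through.
Qed.

Lemma sigma_split u v : u \in I -> v \in I -> u != v ->
  sigma e u v = #|nbhd e u :\: nbhd e v| * #|nbhd e v :\: nbhd e u|.
Proof.
move=> uI vI uv; rewrite /sigma P4_throughE // card_in_imset ?cardsX //.
move=> [x y] [x' y'] /setXP[xA yB] /setXP[x'A y'B] /= XE.
have P' := induced_P4_through uI vI uv x'A y'B.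
have [x_mem y_mem] : x \in [set u; x'; y'; v] /\ y \in [set u; x'; y'; v].
  by rewrite -XE !inE !eqxx !orbT.
move: xA yB; rewrite !inE => /andP[_ ux] /andP[_ vy].
have [xE _] := induced_P4_nbhd_ends e_sym e_irr P' x_mem.
have [_ yE] := induced_P4_nbhd_ends e_sym e_irr P' y_mem.
by rewrite (xE ux) (yE vy).
Qed.

Lemma sigma_square u v : u \in I -> v \in I -> u != v -> vdeg e u = vdeg e v ->
  sigma e u v = #|nbhd e u :\: nbhd e v| ^ 2.
Proof. by move=> uI vI uv /cardsD_sym duv; rewrite sigma_split // -duv. Qed.

Lemma sigma_gt0 u v : u \in I -> v \in I -> u != v -> vdeg e u = vdeg e v ->
  (0 < sigma e u v) = (nbhd e u != nbhd e v).
Proof.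
move=> uI vI uv duv; rewrite sigma_square // expn_gt0 orbF card_gt0 setD_eq0.
by rewrite eqEcard -/(vdeg e u) -/(vdeg e v) duv leqnn andbT.
Qed.

Lemma twinsE u v : u \in I -> v \in I -> twins e u v = (nbhd e u == nbhd e v).
Proof.
have nbhdD1 a b : a \in I -> b \in I -> nbhd e a :\ b = nbhd e a.
  move=> aI bI; apply/setP => x; rewrite !inE.
  by case: eqP => [->|]; rewrite ?(negbTE (split_nonedgeI aI bI)).
by move=> uI vI; rewrite /twins !nbhdD1.
Qed.

Hypothesis KI_bal : balanced e K I.

Lemma balanced_nonnbhdK u : u \in I -> exists2 k, k \in K & ~~ e u k.
Proof.
move=> uI; apply/exists_inP; apply: contraT => /exists_inPn uK.
have : is_clique e (u |: K).
  apply/forall_inP => x /setU1P[->|xK]; apply/forall_inP => y /setU1P[->|yK];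
    apply/implyP => xy.
  - by rewrite eqxx in xy.
  - exact/negbNE/uK.
  - by rewrite e_sym; apply/negbNE/uK.
  - exact: split_edgeK.
move/clique_card_le_omega; case/andP: KI_bal => /eqP <- _.
by rewrite cardsU1 (split_notinK uI) ltnn.
Qed.

Lemma balanced_nbhdI k : k \in K -> exists2 w, w \in I & e w k.
Proof.
move=> kK; apply/exists_inP; apply: contraT => /exists_inPn kI.
have : is_stable e (k |: I).
  apply/forall_inP => x /setU1P[->|xI]; apply/forall_inP => y /setU1P[->|yI];
    apply/implyP => xy.
  - by rewrite eqxx in xy.
  - by rewrite e_sym; apply: kI.
  - exact: kI.
  - exact: split_nonedgeI.
move/stable_card_le_alpha; case/andP: KI_bal => _ /eqP <-.
have kI' : k \notin I by apply: contraL kK; apply: split_notinK.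
by rewrite cardsU1 kI' ltnn.
Qed.

Lemma balanced_nbhd_neq u : u \in I -> exists2 w, w \in I & nbhd e w != nbhd e u.
Proof.
move=> uI; have [k kK uk] := balanced_nonnbhdK uI; have [w wI wk] := balanced_nbhdI kK.
exists w => //; apply: contraNneq uk => wuE.
have : k \in nbhd e w by rewrite inE.
by rewrite wuE inE.
Qed.

Lemma balanced_I_nonempty : 0 < #|T| -> exists u, u \in I.
Proof.
case/card_gt0P => t _; have : is_stable e [set t].
  by apply/forall_inP => x /set1P->; apply/forall_inP => y /set1P->; rewrite eqxx.
move/stable_card_le_alpha; case/andP: KI_bal => _ /eqP <-.
by rewrite cards1 => /card_gt0P.
Qed.

Lemma balanced_vdeg_ltK u : u \in I -> vdeg e u < #|K|.
Proof.
move=> uI; have [k kK uk] := balanced_nonnbhdK uI.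
apply/proper_card/properP; split; last by exists k; rewrite ?inE.
by apply/subsetP => x; rewrite inE; apply: split_nbhdK.
Qed.

Lemma balanced_vdeg_gt0 u : u \in I -> exists2 w, w \in I & 0 < vdeg e w.
Proof.
move=> uI; have [k kK _] := balanced_nonnbhdK uI; have [w wI wk] := balanced_nbhdI kK.
by exists w => //; apply/card_gt0P; exists k; rewrite inE.
Qed.

End SplitGraph.

Theorem theorem3p2 (T : finType) (e : rel T) (K I : {set T}) :
  symmetric e -> irreflexive e -> 0 < #|T| ->
  split_bipartition e K I -> homogeneous e K I ->
  (* (1) *)
  (forall u v, u \in I -> v \in I -> u != v -> (sigma e u v = 0 <-> twins e u v)) /\
  (* (2) *)
  (forall u v, u \in I -> v \in I -> u != v -> exists k, sigma e u v = k ^ 2) /\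
  (* (3) *)
  (1 <= P4deg e /\
   forall d, (forall v, v \in I -> vdeg e v = d) -> d <> 0 /\ d <> #|K|) /\
  (* (4) no induced K2 + K1 in Phi *)
  (forall x y z, x \in I -> y \in I -> z \in I ->
     x != z -> y != z ->
     ~ [/\ phi_adj e I x y, ~~ phi_adj e I x z & ~~ phi_adj e I y z]) /\
  (* (5) diam(Phi) <= 2 *)
  (forall u v, u \in I -> v \in I -> u != v ->
     phi_adj e I u v \/ exists2 w, phi_adj e I u w & phi_adj e I w v) /\
  (* (6) no induced cycle of length >= 5 in Phi *)
  (forall n (c : 'I_n -> T), 5 <= n -> injective c -> (forall i, c i \in I) ->
     ~ (forall i j : 'I_n,
          phi_adj e I (c i) (c j) = (i.+1 %% n == j) || (j.+1 %% n == i))).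
Proof.
move=> e_sym e_irr T_gt0 KI /andP[KI_bal /forall_inP hdeg].
have degE u v : u \in I -> v \in I -> vdeg e u = vdeg e v.
  by move=> uI vI; apply/eqP; exact: (forall_inP (hdeg u uI) v vI).
have sigma_pos u v : u \in I -> v \in I -> u != v ->
    (0 < sigma e u v) = (nbhd e u != nbhd e v).
  by move=> uI vI uv; apply: (sigma_gt0 e_sym e_irr KI uI vI uv); apply: degE.
have adjE u v : u \in I -> v \in I -> u != v -> phi_adj e I u v = (nbhd e u != nbhd e v).
  by move=> uI vI uv; rewrite /phi_adj uI vI uv sigma_pos.
have adj_irr : irreflexive (phi_adj e I) by move=> u; rewrite /phi_adj eqxx /= !andbF.
have nbhd_neq := balanced_nbhd_neq e_sym e_irr KI KI_bal.
have [u0 u0I] := balanced_I_nonempty KI_bal T_gt0.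
split; [|split; [|split; [split|split; [|split]]]].
- move=> u v uI vI uv; rewrite (twinsE e_irr KI) // -[_ == _]negbK -sigma_pos //.
  by rewrite lt0n negbK; apply: rwP eqP.
- move=> u v uI vI uv; exists #|nbhd e u :\: nbhd e v|.
  by apply: (sigma_square e_sym e_irr KI uI vI uv); apply: degE.
- have [w wI wu0] := nbhd_neq u0 u0I.
  apply: leq_trans (sigma_le_P4deg e w u0); rewrite sigma_pos //.
  by apply: contra_neq wu0 => ->.
- move=> d vdegE; split=> [d0|dK].
    by have [w wI] := balanced_vdeg_gt0 e_sym e_irr KI KI_bal u0I; rewrite vdegE // d0.
  by move: (balanced_vdeg_ltK e_sym e_irr KI KI_bal u0I); rewrite vdegE // dK ltnn.
- exact: multipartite_no_K2K1 adj_irr adjE.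
- by move=> u v uI vI; apply: multipartite_diam2 adjE _ _ (nbhd_neq u uI) uI vI.
- exact: multipartite_no_long_induced_cycle adjE.
Qed.
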